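(* Let $P\subseteq\mathbb{R}^2$ be a convex polygon such that $\tau P=P^{\circ}$ and $P$ has exactly $6$ vertices. Then the area of $P$ equals $3$.
   Context: $\tau:\mathbb{R}^2\to\mathbb{R}^2$ denotes the $90^\circ$ counterclockwise rotation. The polar of $P$ is $P^{\circ}=\{x\in\mathbb{R}^2: y^\top x\le 1\text{ for all }y\in P\}$. *)

From HB Require Import structures.
From mathcomp Require Import all_boot all_order all_algebra.
From mathcomp Require Import all_classical all_reals all_analysis.
Set Implicit Arguments. Unset Strict Implicit. Unset Printing Implicit Defensive.
Import Order.TTheory GRing.Theory Num.Theory.
Local Open Scope classical_set_scope.
Local Open Scope ring_scope.

Section Defs.
Context {R : realType}.

Definition dot2 (x y : R * R) : R := x.1 * y.1 + x.2 * y.2.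

Definition tau (x : R * R) : R * R := (- x.2, x.1).

Definition conv_hull (V : seq (R * R)) : set (R * R) :=
  [set x | exists w : 'I_(size V) -> R,
     (forall i, 0 <= w i) /\ \sum_(i < size V) w i = 1 /\
     x = (\sum_(i < size V) w i * (nth 0 V i).1,
          \sum_(i < size V) w i * (nth 0 V i).2)].

Definition convex_polygon (P : set (R * R)) : Prop :=
  exists V : seq (R * R), P = conv_hull V.

Definition polar (P : set (R * R)) : set (R * R) :=
  [set x | forall y, P y -> dot2 y x <= 1].

Definition is_vertex (P : set (R * R)) (x : R * R) : Prop :=
  P x /\ forall y z t, P y -> P z -> 0 < t < 1 ->
    x = (t * y.1 + (1 - t) * z.1, t * y.2 + (1 - t) * z.2) -> y = z.

Definition has_n_vertices (P : set (R * R)) (n : nat) : Prop :=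
  exists s : seq (R * R), uniq s /\ size s = n /\
    forall x, x \in s <-> is_vertex P x.

Definition area (P : set (R * R)) : \bar R :=
  ((@lebesgue_measure R) \x (@lebesgue_measure R))%E P.

End Defs.

From HB Require Import structures.
From mathcomp Require Import all_boot all_order all_algebra.
From mathcomp Require Import all_classical all_reals all_analysis.
From mathcomp Require Import ring lra measurable_realfun.
Import Order.TTheory GRing.Theory Num.Theory.
Import numFieldNormedType.Exports.
Local Open Scope classical_set_scope.
Local Open Scope ring_scope.

(* Write det2 x y := x.1 * y.2 - x.2 * y.1, so that dot2 y (tau x) = det2 x y
   and tau P = polar P says P = {x | det2 x y <= 1 for all y in P}.  Hence
   P = -P, and since a linear functional on a polygon attains its maximum at a
   vertex, y may be restricted to the vertices.  With six vertices +-p, +-q,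
   +-r this makes P the hexagon |det2 x p|, |det2 x q|, |det2 x r| <= 1, and
   p, q, r being extreme forces |det2 p q| = |det2 p r| = |det2 q r| = 1.
   After sign changes P = {x | |det2 x a|, |det2 x b|, |det2 x (b - a)| <= 1}
   with det2 a b = 1; shears preserve det2 and area and carry (a, b) to the
   standard basis, where the hexagon |x|, |y|, |x + y| <= 1 has area 3. *)

Section SelfPolarHexagon.
Local Set Implicit Arguments.
Local Unset Strict Implicit.
Variable R : realType.

Section OppClosed.
Variable V : zmodType.
Implicit Types s l : seq V.

Lemma uniq_exists_notin (T : eqType) (s l : seq T) :
  uniq s -> (size l < size s)%N -> exists2 v, v \in s & v \notin l.
Proof.
move=> us ls; have [/hasP[v vs vl]|/hasPn sl] := boolP (has (predC (mem l)) s).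
  by exists v.
have : (size s <= size l)%N by apply: uniq_leq_size => // v /sl /negbNE.
by rewrite leqNgt ls.
Qed.

Variable s : seq V.
Hypotheses (us : uniq s) (sN : {in s, forall x, - x \in s})
  (s_neqN : {in s, forall x, x != - x}).

Lemma opp_closed_extend l :
  uniq l -> {in l, forall y, - y \in l} -> {subset l <= s} ->
  (size l < size s)%N ->
  exists2 x, x \in s & [/\ uniq [:: x, - x & l],
    {in [:: x, - x & l], forall y, - y \in [:: x, - x & l]} &
    {subset [:: x, - x & l] <= s}].
Proof.
move=> ul lN ls /(uniq_exists_notin us)[x xs xl]; exists x => //; split.
- rewrite /= inE negb_or s_neqN //= xl ul andbT.
  by apply: contra xl => /lN; rewrite opprK.
- move=> y; rewrite !inE => /or3P[/eqP->|/eqP->|/lN yl].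
  + by rewrite eqxx orbT.
  + by rewrite opprK eqxx.
  + by rewrite yl !orbT.
- by move=> y; rewrite !inE => /or3P[/eqP->|/eqP->|/ls //]; last exact: sN.
Qed.

Lemma opp_closed_six : size s = 6%N ->
  exists p q r, [/\ p \in s, q \in s, r \in s &
    {subset s <= [:: p; - p; q; - q; r; - r]}].
Proof.
move=> s6; have lt6 k : (k < 6)%N -> (k < size s)%N by rewrite s6.
have nil_in P : {in [::], forall y : V, P y} by move=> y; rewrite in_nil.
have [r rs [ur rN rsub]] :=
  opp_closed_extend (l := [::]) isT (nil_in _) (nil_in _) (lt6 0 isT).
have [q qs [uq qN qsub]] := opp_closed_extend ur rN rsub (lt6 2 isT).
have [p ps [up _ psub]] := opp_closed_extend uq qN qsub (lt6 4 isT).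
exists p, q, r; split=> // v; have [_ eqs] := uniq_min_size up psub (eq_leq s6).
by rewrite -eqs.
Qed.

End OppClosed.

Implicit Types (x y z u v w p q r a b : R * R) (W : seq (R * R)).

Definition det2 x y : R := x.1 * y.2 - x.2 * y.1.

Lemma det2E x y : det2 x y = dot2 (tau x) y.
Proof. by rewrite /det2 /dot2 /=; ring. Qed.

Lemma dot2C x y : dot2 x y = dot2 y x.
Proof. by rewrite /dot2 mulrC [x.2 * _]mulrC. Qed.

Lemma det2C x y : det2 y x = - det2 x y.
Proof. by rewrite /det2; ring. Qed.

Lemma det2xx x : det2 x x = 0.
Proof. by rewrite /det2 mulrC subrr. Qed.

Lemma det2Dl x y z : det2 (x + y) z = det2 x z + det2 y z.
Proof. by rewrite /det2 /=; ring. Qed.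

Lemma pair_ext x y : x.1 = y.1 -> x.2 = y.2 -> x = y.
Proof. by case: x y => [? ?] [? ?] /= -> ->. Qed.

Lemma scale_pairE (c : R) x : c *: x = (c * x.1, c * x.2).
Proof. by []. Qed.

Lemma det2Zl c x y : det2 (c *: x) y = c * det2 x y.
Proof. by rewrite scale_pairE /det2 /=; ring. Qed.

Lemma det2Zr c x y : det2 x (c *: y) = c * det2 x y.
Proof. by rewrite scale_pairE /det2 /=; ring. Qed.

Lemma det2Nl x y : det2 (- x) y = - det2 x y.
Proof. by rewrite /det2 /=; ring. Qed.

Lemma det2Nr x y : det2 x (- y) = - det2 x y.
Proof. by rewrite /det2 /=; ring. Qed.

Lemma det2_eq1_neq0 a b : det2 a b = 1 -> a != 0.
Proof.
move=> hab; apply/eqP => a0; move: hab.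
by rewrite a0 /det2 /= !mul0r subrr => /eqP; rewrite eq_sym oner_eq0.
Qed.

Lemma det2_cramer p q r : det2 p q *: r = det2 r q *: p + det2 p r *: q.
Proof. by rewrite !scale_pairE; apply: pair_ext; rewrite /det2 /=; ring. Qed.

Lemma pair_eq0 x : (x == 0) = (x.1 == 0) && (x.2 == 0).
Proof. by case: x. Qed.

Lemma pair_eqNr x : (- x == x) = (x == 0).
Proof.
apply/eqP/eqP => [Nx|->]; last exact: oppr0.
have /eqP := congr1 fst Nx; have /eqP := congr1 snd Nx.
by rewrite /= !eqNr => /eqP h2 /eqP h1; exact: pair_ext.
Qed.

Lemma tau_eq0 x : (tau x == 0) = (x == 0).
Proof. by rewrite !pair_eq0 /= oppr_eq0 andbC. Qed.

Lemma tau_inj : injective (@tau R).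
Proof.
by case=> [? ?] [? ?] /(congr1 (fun x => (x.2, - x.1))) /=; rewrite !opprK.
Qed.

Lemma dot2_gt0 u : u != 0 -> 0 < dot2 u u.
Proof.
move=> u0; have h1 := sqr_ge0 u.1; have h2 := sqr_ge0 u.2.
rewrite /dot2 -!expr2 lt_def addr_ge0 // andbT paddr_eq0 //.
by rewrite !sqrf_eq0 -pair_eq0.
Qed.

Lemma dot2_tau_decomp u y :
  dot2 u u *: y = dot2 u y *: u + dot2 (tau u) y *: tau u.
Proof. by rewrite !scale_pairE; apply: pair_ext; rewrite /dot2 /=; ring. Qed.

Lemma dot2_tau_inj u y z : u != 0 ->
  dot2 u y = dot2 u z -> dot2 (tau u) y = dot2 (tau u) z -> y = z.
Proof.
move=> /dot2_gt0/gt_eqF/negbT u0 e1 e2; apply: (scalerI u0).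
by rewrite !dot2_tau_decomp e1 e2.
Qed.

(** * Extreme points of convex hulls *)

Lemma convex_comb_le_eq (a b m t : R) : 0 < t < 1 -> a <= m -> b <= m ->
  m = t * a + (1 - t) * b -> a = m /\ b = m.
Proof.
move=> /andP[t0 t1] am bm e.
have h1 : 0 <= t * (m - a) by apply: mulr_ge0; lra.
have h2 : 0 <= (1 - t) * (m - b) by apply: mulr_ge0; lra.
have h3 : t * (m - a) + (1 - t) * (m - b) = 0 by rewrite e; ring.
have ha : t * (m - a) = 0 by lra.
have hb : (1 - t) * (m - b) = 0 by lra.
move: ha hb => /eqP; rewrite mulf_eq0 (gt_eqF t0) subr_eq0 /= => /eqP <- /eqP.
by rewrite mulf_eq0 subr_eq0 (gt_eqF t1) subr_eq0 /= => /eqP <-.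
Qed.

Lemma vertex_midpoint P x y z : is_vertex P x -> P y -> P z ->
  x = 2^-1 *: (y + z) -> y = z.
Proof.
move=> [_ hx] Py Pz xE; apply: (hx y z 2^-1) => //.
  by apply/andP; split; lra.
by rewrite xE scale_pairE /=; congr pair; lra.
Qed.

Lemma exists_lexmax (T : eqType) (f g : T -> R) (l : seq T) : l != [::] ->
  exists2 w : T, w \in l &
    forall v : T, v \in l -> f v <= f w /\ (f v = f w -> g v <= g w).
Proof.
elim: l => // a l IH _.
have [->|/IH[w wl Hw]] := eqVneq l [::].
  by exists a => [|v]; rewrite ?mem_seq1 // => /eqP ->.
have [fa|fa|fa] := ltrgtP (f a) (f w).
- exists w => [|v]; first by rewrite inE wl orbT.
  by rewrite inE => /orP[/eqP ->|/Hw //]; split=> [|e]; [exact: ltW|lra].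
- exists a => [|v]; first by rewrite mem_head.
  rewrite inE => /orP[/eqP ->//|/Hw[h1 _]]; split=> [|e]; lra.
- have [ga|ga] := leP (g w) (g a).
    exists a => [|v]; first by rewrite mem_head.
    rewrite inE => /orP[/eqP ->//|/Hw[h1 h2]].
    by rewrite fa; split=> // /h2 /le_trans; apply.
  exists w => [|v]; first by rewrite inE wl orbT.
  by rewrite inE => /orP[/eqP ->|/Hw //]; rewrite fa; split=> // _; exact: ltW.
Qed.

Lemma convex_sum_le n (lam F : 'I_n -> R) m :
  (forall i, 0 <= lam i) -> \sum_i lam i = 1 ->
  (forall i, lam i != 0 -> F i <= m) -> \sum_i lam i * F i <= m.
Proof.
move=> lam0 lam1 Fm; rewrite -[leRHS]mul1r -lam1 mulr_suml.
apply: ler_sum => i _; have [->|li] := eqVneq (lam i) 0; first by rewrite !mul0r.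
exact/ler_wpM2l/Fm.
Qed.

Lemma convex_sum_eq n (lam F : 'I_n -> R) m :
  (forall i, 0 <= lam i) -> \sum_i lam i = 1 -> (forall i, F i <= m) ->
  \sum_i lam i * F i = m -> forall i, lam i != 0 -> F i = m.
Proof.
move=> lam0 lam1 Fm e i li.
have gap0 : \sum_j lam j * (m - F j) = 0.
  under eq_bigr do rewrite mulrBr.
  by rewrite sumrB -mulr_suml lam1 mul1r e subrr.
have /eqP : lam i * (m - F i) = 0.
  by apply: (psumr_eq0P _ gap0) => // j _; rewrite mulr_ge0 ?subr_ge0.
by rewrite mulf_eq0 subr_eq0 (negbTE li) => /eqP.
Qed.

Lemma dot2_conv u W (lam : 'I_(size W) -> R) :
  dot2 u (\sum_(i < size W) lam i * (nth 0 W i).1,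
          \sum_(i < size W) lam i * (nth 0 W i).2) =
  \sum_(i < size W) lam i * dot2 u (nth 0 W i).
Proof.
rewrite /dot2 /= !mulr_sumr -big_split /=.
by apply: eq_bigr => i _; ring.
Qed.

Lemma mem_conv_hull W v : v \in W -> conv_hull W v.
Proof.
move=> vW; have jW : (index v W < size W)%N by rewrite index_mem.
pose j := Ordinal jW.
have pick (F : 'I_(size W) -> R) : \sum_i (i == j)%:R * F i = F j.
  rewrite (bigD1 j) //= eqxx mul1r big1 ?addr0 // => i /negbTE ->.
  by rewrite mul0r.
exists (fun i => (i == j)%:R); split=> [i|]; first by rewrite ler0n.
split.
  by rewrite -[RHS](pick (fun _ => 1)); apply: eq_bigr => i _; rewrite mulr1.
by rewrite !pick /= nth_index //; case: (v).
Qed.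

Lemma conv_hull_nil y : ~ conv_hull [::] y.
Proof. by case=> lam [_ []]; rewrite big_ord0 => /esym/eqP; rewrite oner_eq0. Qed.

Lemma conv_hull_lexle W u u' w :
  (forall v, v \in W -> dot2 u v <= dot2 u w /\
     (dot2 u v = dot2 u w -> dot2 u' v <= dot2 u' w)) ->
  forall y, conv_hull W y -> dot2 u y <= dot2 u w /\
     (dot2 u y = dot2 u w -> dot2 u' y <= dot2 u' w).
Proof.
move=> Hw _ [lam [lam0 [lam1 ->]]]; rewrite !dot2_conv.
have memW (i : 'I_(size W)) : nth 0 W i \in W by apply: mem_nth.
have le_u (i : 'I_(size W)) : dot2 u (nth 0 W i) <= dot2 u w.
  by have [] := Hw _ (memW i).
split=> [|e]; first by apply: convex_sum_le => // i _; exact: le_u.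
apply: convex_sum_le => // i li; have [_] := Hw _ (memW i); apply.
by apply: (convex_sum_eq lam0 lam1 le_u e).
Qed.

(* A lexicographic maximiser for (u, tau u) is an extreme point, because u and
   tau u together separate points. *)
Lemma conv_hull_vertex_argmax W u y : conv_hull W y -> u != 0 ->
  exists2 v, is_vertex (conv_hull W) v &
    forall z, conv_hull W z -> dot2 u z <= dot2 u v.
Proof.
move=> Wy u0.
have W0 : W != [::] by apply: contraPneq Wy => ->; exact: conv_hull_nil.
have [w wW /conv_hull_lexle lex] :=
  exists_lexmax (dot2 u) (dot2 (tau u)) W0.
exists w => [|z /lex[le_w _] //]; split=> [|y' z' t Py' Pz' t01 wE].
  exact: mem_conv_hull.
have dot2_comb u' : dot2 u' w = t * dot2 u' y' + (1 - t) * dot2 u' z'.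
  by rewrite wE /dot2 /=; ring.
have [f1 g1] := lex _ Py'; have [f2 g2] := lex _ Pz'.
have [a1 a2] := convex_comb_le_eq t01 f1 f2 (dot2_comb u).
have [b1 b2] := convex_comb_le_eq t01 (g1 a1) (g2 a2) (dot2_comb (tau u)).
by apply: (dot2_tau_inj u0); [rewrite a1 a2 | rewrite b1 b2].
Qed.

(** * Rotationally self-polar polygons *)

Lemma tau_polarP P : tau @` P = polar P ->
  forall x, P x <-> (forall y, P y -> det2 x y <= 1).
Proof.
move=> hP x; have -> : P x <-> polar P (tau x).
  by rewrite -hP; split=> [Px|[z Pz /tau_inj <-//]]; exists x.
by split=> h y /h; rewrite dot2C -det2E.
Qed.

Definition hexagon p q r : set (R * R) :=
  [set x | [/\ `|det2 x p| <= 1, `|det2 x q| <= 1 & `|det2 x r| <= 1]].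

Definition hex a b := hexagon a b (b - a).

Lemma hexagon_rot p q r : hexagon p q r = hexagon q r p.
Proof. by apply/seteqP; split=> x [] /=. Qed.

Lemma hexagon_swap p q r : hexagon p q r = hexagon p r q.
Proof. by apply/seteqP; split=> x [] /=. Qed.

Lemma hexagon_scale (c d : R) p q r : `|c| = 1 -> `|d| = 1 ->
  hexagon p q r = hexagon p (c *: q) (d *: r).
Proof.
move=> c1 d1; apply/seteqP; split=> x.
all: by rewrite /hexagon /= !det2Zr !normrM c1 d1 !mul1r.
Qed.

(* If |det2 u v| < 1, both u + e w and u - e w lie in the hexagon for
   e := (1 - |det2 u v|) / 2, so u is not extreme. *)
Lemma hexagon_vertex_det u v w : is_vertex (hexagon u v w) u ->
  hexagon u v w w -> w != 0 -> `|det2 u v| = 1.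
Proof.
move=> vu [hwu hwv _] w0; have [[_ huv huw] _] := vu.
apply/eqP; rewrite eq_le huv leNgt; apply/negP => lt1.
have d0 := normr_ge0 (det2 u v).
pose e := (1 - `|det2 u v|) / 2.
have e0 : 0 < e by rewrite divr_gt0 // subr_gt0.
have in_hex k : `|k| = e -> hexagon u v w (u + k *: w).
  move=> ke; split; rewrite det2Dl det2Zl ?det2xx ?mulr0 ?add0r ?addr0 //.
    rewrite normrM ke; apply: le_trans (ler_wpM2l (ltW e0) hwu) _.
    by rewrite /e; lra.
  apply: le_trans (ler_normD _ _) _; rewrite normrM ke.
  by have := ler_wpM2l (ltW e0) hwv; rewrite /e; lra.
have := vertex_midpoint vu (in_hex e _) (in_hex (- e) _).
rewrite normrN gtr0_norm // => /(_ erefl erefl).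
have -> : 2^-1 *: (u + e *: w + (u + - e *: w)) = u.
  by rewrite !scale_pairE; apply: pair_ext; rewrite /=; lra.
move=> /(_ erefl) /addrI /eqP; rewrite scaleNr eq_sym pair_eqNr scaler_eq0.
by rewrite (gt_eqF e0) (negbTE w0).
Qed.

Lemma hexagon_unimodular p q r :
  `|det2 p q| = 1 -> `|det2 p r| = 1 -> `|det2 q r| = 1 ->
  exists a b, det2 a b = 1 /\ hexagon p q r = hex a b.
Proof.
move=> hpq hpr hqr.
have sqr1 (d : R) : `|d| = 1 -> d * d = 1.
  by move=> d1; rewrite -expr2 -(ger0_norm (sqr_ge0 d)) normrX d1 expr1n.
pose q' := det2 p q *: q; pose r' := det2 p r *: r.
have pq' : det2 p q' = 1 by rewrite det2Zr sqr1.
have pr' : det2 p r' = 1 by rewrite det2Zr sqr1.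
have /eqP : `|det2 r' q'| = 1.
  by rewrite det2Zl det2Zr !normrM hpr hpq (@det2C q r) normrN hqr !mul1r.
have := @det2_cramer p q' r'; rewrite pq' pr' !scale1r.
set k := det2 r' q' => r'E.
rewrite (hexagon_scale p q r hpq hpr) -/q' -/r'.
rewrite eqr_norml => /andP[/orP[]/eqP k1 _].
- have -> : q' = r' - p by rewrite r'E k1 scale1r addrC addKr.
  by exists p, r'; split=> //; rewrite hexagon_swap.
- have -> : r' = q' - p by rewrite r'E k1 scaleN1r addrC.
  by exists p, q'.
Qed.

Section SelfPolar.
Variable P : set (R * R).
Hypothesis P_selfpolar : forall x, P x <-> (forall y, P y -> det2 x y <= 1).

Lemma selfpolarN x : P x -> P (- x).
Proof.
move=> Px; apply/P_selfpolar => y /P_selfpolar/(_ x Px).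
by rewrite det2Nl -det2C.
Qed.

Lemma selfpolar_det_le1 x y : P x -> P y -> `|det2 x y| <= 1.
Proof.
move=> Px Py; have le1 := (P_selfpolar x).1 Px.
rewrite ler_norml lerNl -det2Nr; apply/andP; split; apply: le1 => //.
exact: selfpolarN.
Qed.

Lemma selfpolar_vertexN x : is_vertex P x -> is_vertex P (- x).
Proof.
move=> [Px hx]; split=> [|y z t Py Pz t01 e]; first exact: selfpolarN.
apply: oppr_inj; apply: (hx (- y) (- z) t) => //; try exact: selfpolarN.
by rewrite -[x]opprK e; apply: pair_ext; rewrite /=; ring.
Qed.

Lemma selfpolar_vertex0 y : is_vertex P 0 -> P y -> y = 0.
Proof.
move=> v0 Py; have := vertex_midpoint v0 Py (selfpolarN Py).
by rewrite subrr scaler0 => /(_ erefl) /eqP; rewrite eq_sym pair_eqNr => /eqP.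
Qed.

Lemma selfpolar_vertexP W x : P = conv_hull W ->
  P x <-> (forall v, is_vertex P v -> det2 x v <= 1).
Proof.
move=> PW; split=> [Px v [Pv _]|hx]; first exact: (P_selfpolar x).1.
apply/P_selfpolar => y Py.
have [->|x0] := eqVneq x 0; first by rewrite /det2 /= !mul0r subr0 ler01.
rewrite PW in Py hx; rewrite -tau_eq0 in x0.
have [v vv vmax] := conv_hull_vertex_argmax Py x0.
by rewrite det2E (le_trans (vmax _ Py)) // -det2E hx.
Qed.

Lemma selfpolar_hexagonE W p q r : P = conv_hull W ->
  (forall v, is_vertex P v -> v \in [:: p; - p; q; - q; r; - r]) ->
  P p -> P q -> P r -> P = hexagon p q r.
Proof.
move=> PW hv Pp Pq Pr; apply/seteqP; split=> x.
  by move=> Px; split; apply: selfpolar_det_le1.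
case=> /ler_normlP[hp' hp] /ler_normlP[hq' hq] /ler_normlP[hr' hr].
have /allP hall : all (fun v => det2 x v <= 1) [:: p; - p; q; - q; r; - r].
  by rewrite /= !det2Nr hp hp' hq hq' hr hr'.
by apply/(selfpolar_vertexP x PW) => v /hv /hall.
Qed.

Lemma selfpolar_six_vertices W s : P = conv_hull W -> uniq s -> size s = 6%N ->
  (forall x, x \in s <-> is_vertex P x) ->
  exists a b, det2 a b = 1 /\ P = hex a b.
Proof.
move=> PW us s6 hs; have vs x : x \in s -> is_vertex P x by move/hs.
have sN : {in s, forall x, - x \in s} by move=> x /hs/selfpolar_vertexN/hs.
have s_neq0 : {in s, forall x, x != 0}.
  move=> x xs; apply/eqP => x0.
  have v0 : is_vertex P 0 by rewrite -x0; exact: vs.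
  have [y ys] : exists2 y, y \in s & y \notin [:: x].
    by apply: uniq_exists_notin; rewrite ?s6.
  by rewrite mem_seq1 (selfpolar_vertex0 v0 (vs y ys).1) x0 eqxx.
have s_neqN : {in s, forall x, x != - x}.
  by move=> x /s_neq0; rewrite -pair_eqNr eq_sym.
have [p [q [r [ps qs rs hsub]]]] := opp_closed_six us sN s_neqN s6.
have hexE : P = hexagon p q r.
  apply: (selfpolar_hexagonE PW) => [v /hs /hsub //||| ]; exact: (vs _ _).1.
have det1 u v w : P = hexagon u v w -> u \in s -> w \in s -> `|det2 u v| = 1.
  move=> PE uS wS; apply: (hexagon_vertex_det (w := w)); rewrite -?PE.
  - exact: vs.
  - exact: (vs w wS).1.
  - exact: s_neq0.
have hpq := det1 _ _ _ hexE ps rs.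
have hpr : `|det2 p r| = 1.
  by apply: (det1 _ _ q) => //; rewrite hexE hexagon_swap.
have hqr : `|det2 q r| = 1.
  by apply: (det1 _ _ p) => //; rewrite hexE hexagon_rot.
by rewrite hexE; exact: hexagon_unimodular.
Qed.

End SelfPolar.

(** * Area of the hexagon *)

Definition shear_v (c : R) x : R * R := (x.1, x.2 + c * x.1).
Definition shear_h (c : R) x : R * R := (x.1 + c * x.2, x.2).

Lemma det2_shear_v c x y : det2 x (shear_v c y) = det2 (shear_v (- c) x) y.
Proof. by rewrite /det2 /=; ring. Qed.

Lemma det2_shear_h c x y : det2 x (shear_h c y) = det2 (shear_h (- c) x) y.
Proof. by rewrite /det2 /=; ring. Qed.

Lemma shear_v_det2 c a b : det2 (shear_v c a) (shear_v c b) = det2 a b.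
Proof. by rewrite /det2 /=; ring. Qed.

Lemma shear_h_det2 c a b : det2 (shear_h c a) (shear_h c b) = det2 a b.
Proof. by rewrite /det2 /=; ring. Qed.

Lemma hex_shear_v c a b :
  hex (shear_v c a) (shear_v c b) = shear_v (- c) @^-1` hex a b.
Proof.
rewrite /hex.
have -> : shear_v c b - shear_v c a = shear_v c (b - a).
  by apply: pair_ext; rewrite /=; ring.
by apply/seteqP; split=> x; rewrite /hexagon /= !det2_shear_v.
Qed.

Lemma hex_shear_h c a b :
  hex (shear_h c a) (shear_h c b) = shear_h (- c) @^-1` hex a b.
Proof.
rewrite /hex.
have -> : shear_h c b - shear_h c a = shear_h c (b - a).
  by apply: pair_ext; rewrite /=; ring.
by apply/seteqP; split=> x; rewrite /hexagon /= !det2_shear_h.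
Qed.

Lemma lebesgue_measure_shift (c : R) (A : set R) : measurable A ->
  lebesgue_measure [set t | A (t + c)] = lebesgue_measure A.
Proof.
move=> mA; pose f (t : R) : measurableTypeR R := t + c.
have mf : measurable_fun setT f by apply: measurable_funD.
rewrite -[LHS]/(pushforward lebesgue_measure f A).
apply/esym/lebesgue_measure_unique => // _ [[a b]] _ <-.
change (lebesgue_measure `]a, b]%classic =
        lebesgue_measure (f @^-1` `]a, b]%classic)).
rewrite (_ : f @^-1` _ = `](a - c), (b - c)]%classic); last first.
  by apply/seteqP; split=> t /=; rewrite /f !in_itv /= => /andP[h1 h2];
    apply/andP; split; lra.
rewrite !lebesgue_measure_itv /= !lte_fin ltrD2r.
by case: ifP => // _; rewrite -!EFinD; congr EFin; ring.
Qed.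

Lemma area_shear_v c (A : set (R * R)) :
  measurable (A : set (measurableTypeR R * measurableTypeR R)) ->
  area (shear_v c @^-1` A) = area A.
Proof.
move=> mA; rewrite /area /product_measure1 /=; apply: eq_integral => x _ /=.
rewrite (_ : xsection _ x = [set y | xsection A x (y + c * x)]).
  exact/lebesgue_measure_shift/measurable_xsection.
by rewrite !xsectionE.
Qed.

Lemma area_swap (A : set (R * R)) :
  measurable (A : set (measurableTypeR R * measurableTypeR R)) ->
  area A = ((@lebesgue_measure R) \x^ (@lebesgue_measure R))%E A.
Proof.
move=> mA; apply: product_measure_unique => // X Y mX mY.
exact: product_measure2E.
Qed.

Lemma area_shear_h c (A : set (R * R)) :
  measurable (A : set (measurableTypeR R * measurableTypeR R)) ->
  measurable (shear_h c @^-1` A : set (measurableTypeR R * measurableTypeR R)) ->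
  area (shear_h c @^-1` A) = area A.
Proof.
move=> mA mB; rewrite !area_swap // /product_measure2 /=.
apply: eq_integral => y _ /=.
rewrite (_ : ysection _ y = [set x | ysection A y (x + c * y)]).
  exact/lebesgue_measure_shift/measurable_ysection.
by rewrite !ysectionE.
Qed.

Lemma measurable_det2_le1 v :
  measurable ([set x | `|det2 x v| <= 1] :
    set (measurableTypeR R * measurableTypeR R)).
Proof.
have mdet : measurable_fun setT
    (fun x : measurableTypeR R * measurableTypeR R => x.1 * v.2 - x.2 * v.1).
  by apply: measurable_funB; apply: measurable_funM => //;
    (exact: measurable_fst || exact: measurable_snd).
have := mdet measurableT `[-1, 1]%classic (measurable_itv _).
rewrite setTI; congr measurable.
by apply/seteqP; split=> x; rewrite /= in_itv /= ler_norml.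
Qed.

Lemma measurable_hexagon p q r :
  measurable (hexagon p q r : set (measurableTypeR R * measurableTypeR R)).
Proof.
have -> : hexagon p q r = [set x | `|det2 x p| <= 1] `&`
    [set x | `|det2 x q| <= 1] `&` [set x | `|det2 x r| <= 1].
  by apply/seteqP; split=> x /= => [[? ? ?]|[[? ?] ?]].
by do 2?apply: measurableI; exact: measurable_det2_le1.
Qed.

Lemma area_hex_shear_v c a b :
  area (hex (shear_v c a) (shear_v c b)) = area (hex a b).
Proof. by rewrite hex_shear_v area_shear_v //; exact: measurable_hexagon. Qed.

Lemma area_hex_shear_h c a b :
  area (hex (shear_h c a) (shear_h c b)) = area (hex a b).
Proof.
rewrite hex_shear_h area_shear_h //; first exact: measurable_hexagon.
by rewrite -hex_shear_h; exact: measurable_hexagon.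
Qed.

Lemma area_hex_e1 b : det2 (1, 0) b = 1 ->
  area (hex (1, 0) b) = area (hex (1, 0) (0, 1)).
Proof.
move=> hb; have b2 : b.2 = 1 by move: hb; rewrite /det2 /=; lra.
have e1 : shear_h (- b.1) (1, 0) = (1, 0) by rewrite /shear_h /= mulr0 addr0.
have e2 : shear_h (- b.1) b = (0, 1) by rewrite /shear_h b2 mulr1 addrN.
by rewrite -(area_hex_shear_h (- b.1)) e1 e2.
Qed.

(* Shears act transitively on unimodular pairs: make a.1 nonzero, kill a.2,
   then move (a.1, 0) to (1, 0) with three shears. *)
Lemma area_hex_unimodular a b : det2 a b = 1 ->
  area (hex a b) = area (hex (1, 0) (0, 1)).
Proof.
have horizontal a' b' : a'.2 = 0 -> det2 a' b' = 1 ->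
    area (hex a' b') = area (hex (1, 0) (0, 1)).
  move=> a2 hab; have a1 : a'.1 != 0.
    by move: (det2_eq1_neq0 hab); rewrite pair_eq0 a2 eqxx andbT.
  pose k := (1 - a'.1) / a'.1.
  have hdet : det2 (shear_v (- a'.1) (shear_h k (shear_v 1 a')))
                   (shear_v (- a'.1) (shear_h k (shear_v 1 b'))) = 1.
    by rewrite shear_v_det2 shear_h_det2 shear_v_det2.
  have a'E : shear_v (- a'.1) (shear_h k (shear_v 1 a')) = (1, 0).
    by rewrite /shear_v /shear_h /k /= a2; congr pair; field.
  rewrite -(area_hex_shear_v 1) -(area_hex_shear_h k).
  rewrite -(area_hex_shear_v (- a'.1)).
  by rewrite a'E in hdet *; exact: area_hex_e1.
have nonvertical a' b' : a'.1 != 0 -> det2 a' b' = 1 ->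
    area (hex a' b') = area (hex (1, 0) (0, 1)).
  move=> a1 hab; rewrite -(area_hex_shear_v (- (a'.2 / a'.1))).
  by apply: horizontal; rewrite ?shear_v_det2 //=; field.
move=> hab; have [a1|a1] := eqVneq a.1 0; last exact: nonvertical.
have a2 : a.2 != 0.
  by move: (det2_eq1_neq0 hab); rewrite pair_eq0 a1 eqxx /=.
rewrite -(area_hex_shear_h a.2^-1).
apply: nonvertical; last by rewrite shear_h_det2.
by rewrite /shear_h /= a1 add0r mulVf ?oner_neq0.
Qed.

Lemma hex_stdP (x y : R) : hex (1, 0) (0, 1) (x, y) <->
  [/\ -1 <= y <= 1, -1 <= x <= 1 & -1 <= x + y <= 1].
Proof.
rewrite /hex /hexagon /det2 /= !ler_norml.
have -> : x * 0 - y * 1 = - y by ring.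
have -> : x * 1 - y * 0 = x by ring.
have -> : x * (1 - 0) - y * (0 - 1) = x + y by ring.
by split=> -[/andP[? ?] /andP[? ?] /andP[? ?]]; split; apply/andP; split; lra.
Qed.

Lemma hex_std_xsection (x : R) :
  lebesgue_measure (xsection (hex (1, 0) (0, 1)) x) =
  ((fun t : R => (2 - `|t|)%:E) \_ `[-1, 1]%classic) x.
Proof.
rewrite patchE xsectionE; case: ifPn => [|x11]; last first.
  rewrite (_ : _ @^-1` _ = set0) ?measure0 //.
  apply/seteqP; split=> y //= /hex_stdP[_ /andP[h1 h2] _].
  by apply: (negP x11); apply: mem_set; rewrite /= in_itv /= h1 h2.
rewrite inE /= in_itv /= => /andP[x1 x2].
have [x0|x0] := leP 0 x.
  rewrite (_ : _ @^-1` _ = `[-1, 1 - x]%classic); last first.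
    apply/seteqP; split=> y; rewrite /= in_itv /=.
      by move=> /hex_stdP[/andP[? ?] _ /andP[? ?]]; apply/andP; split; lra.
    by move=> /andP[? ?]; apply/hex_stdP; split; apply/andP; split; lra.
  rewrite lebesgue_measure_itv /= lte_fin ifT; last lra.
  by rewrite -EFinB ger0_norm //; congr EFin; ring.
rewrite (_ : _ @^-1` _ = `[-1 - x, 1]%classic); last first.
  apply/seteqP; split=> y; rewrite /= in_itv /=.
    by move=> /hex_stdP[/andP[? ?] _ /andP[? ?]]; apply/andP; split; lra.
  by move=> /andP[? ?]; apply/hex_stdP; split; apply/andP; split; lra.
rewrite lebesgue_measure_itv /= lte_fin ifT; last lra.
by rewrite -EFinB ltr0_norm //; congr EFin; ring.
Qed.

Lemma integral_affine (al be a b : R) : a < b ->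
  (\int[lebesgue_measure]_(t in `[a, b]) (al + be * t)%:E =
   (al * (b - a) + be * (b ^+ 2 - a ^+ 2) / 2)%:E)%E.
Proof.
move=> ab; pose F (t : R) : R := al * t + be / 2 * t ^+ 2.
have dF (t : R) : is_derive t 1 F (al + be * t).
  by apply: is_derive_eq; rewrite /GRing.scale /= !mulr1; field.
have cF : continuous (fun t : R => al * t + be / 2 * t ^+ 2).
  move=> t; apply: cvgD; apply: cvgM;
    (exact: cvg_cst || exact: cvg_id || exact: exprn_continuous).
have cf : continuous (fun t : R => al + be * t).
  move=> t; apply: cvgD; first exact: cvg_cst.
  by apply: cvgM; (exact: cvg_cst || exact: cvg_id).
rewrite (@continuous_FTC2 _ _ F) //.
- by rewrite -EFinD; congr EFin; rewrite /F; field.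
- by apply: continuous_in_subspaceT => t _; apply: cf.
- split; [by move=> t _; apply: ex_derive; exact: dF
         | exact/cvg_at_right_filter/cF | exact/cvg_at_left_filter/cF].
- by move=> t _; rewrite derive1E (@derive_val _ _ _ _ _ _ _ (dF t)).
Qed.

Lemma integral_tent :
  (\int[lebesgue_measure]_(t in `[(-1)%R, 1%R]) ((2 - `|t|)%R)%:E = (3 : R)%:E)%E.
Proof.
have mtent (D : set R) : measurable_fun D (fun t : R => ((2 - `|t|)%R)%:E).
  by apply/measurable_EFinP; apply: measurable_funB => //;
    exact: normr_measurable.
have -> : `[(-1)%R, 1%R]%classic =
    `[(-1)%R, 0%R[%classic `|` `[0%R, 1%R]%classic :> set R.
  apply/seteqP; split=> t /=; rewrite !in_itv /=.
    by move=> /andP[h1 h2]; have [t0|t0] := ltP t 0; [left|right];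
      apply/andP; split; lra.
  by move=> [] /andP[h1 h2]; apply/andP; split; lra.
rewrite ge0_integral_setU //=; last 3 first.
- exact: mtent.
- by move=> t [] /=; rewrite in_itv /= => /andP[h1 h2]; rewrite lee_fin;
    [rewrite ltr0_norm | rewrite ger0_norm]; lra.
- apply/disj_setPS => t /= [].
  by rewrite !in_itv /= => /andP[_ h1] /andP[h2 _]; lra.
have I1 : (\int[lebesgue_measure]_(t in `[(-1)%R, 0%R[) ((2 - `|t|)%R)%:E =
    \int[lebesgue_measure]_(t in `[(-1)%R, 0%R]) ((2 + 1 * t)%R)%:E :> \bar R)%E.
  rewrite -integral_itv_bndo_bndc; last first.
    by apply/measurable_EFinP; apply: measurable_funD => //;
      exact: measurable_funM.
  apply: eq_integral => t; rewrite inE /= in_itv /= => /andP[h1 h2].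
  by rewrite ltr0_norm //; congr EFin; ring.
have I2 : (\int[lebesgue_measure]_(t in `[0%R, 1%R]) ((2 - `|t|)%R)%:E =
    \int[lebesgue_measure]_(t in `[0%R, 1%R]) ((2 + (-1) * t)%R)%:E :> \bar R)%E.
  apply: eq_integral => t; rewrite inE /= in_itv /= => /andP[h1 h2].
  by rewrite ger0_norm //; congr EFin; ring.
rewrite I1 I2 !integral_affine ?ltrN10 ?ltr01 //.
by rewrite -EFinD; congr EFin; field.
Qed.

Lemma area_hex_std : area (hex (1, 0) (0, 1)) = 3%:E.
Proof.
rewrite /area /product_measure1 /=.
under eq_integral do rewrite hex_std_xsection.
by rewrite -integral_mkcond integral_tent.
Qed.

End SelfPolarHexagon.

Theorem proposition7 (R : realType) (P : set (R * R)) :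
  convex_polygon P ->
  tau @` P = polar P ->
  has_n_vertices P 6 ->
  area P = 3%:E.
Proof.
move=> [W PW] htau [s [us [s6 hs]]].
have [a [b [hab ->]]] := selfpolar_six_vertices (tau_polarP htau) PW us s6 hs.
by rewrite area_hex_unimodular // area_hex_std.
Qed.
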